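(* Let $\alpha \in (0,1)$. Let $f:[0,1]\to\mathbb{R}_{\ge 0}$ be convex with $f(1-\alpha)=0$, and let $f':[0,1]\to\mathbb{R}$ be a subderivative of $f$ (i.e. $f'(p)\in\partial f(p)$ for every $p\in[0,1]$) satisfying $f'(1-\alpha)=0$. Define $$\ell(p,y) := -f(p)-(y-p)f'(p), \qquad p\in[0,1],\ y\in\{0,1\}.$$ Then $\ell$ is a proper score, and $$\ell\text{-ERT} = \mathbb{E}_X\big[f(p(X))\big].$$
   Context: Let $(X,Y)\sim\mathbb{P}_{X,Y}$ on $\mathcal{X}\times\mathcal{Y}$, and let $C_\alpha(\cdot)$ be a prediction set rule mapping each $x\in\mathcal{X}$ to a subset $C_\alpha(x)\subseteq\mathcal{Y}$ (measurable). Let $Z:=\mathbf{1}\{Y\in C_\alpha(X)\}\in\{0,1\}$ and define the conditional coverage $p(x):=\mathbb{P}(Z=1\mid X=x)=\mathbb{P}(Y\in C_\alpha(X)\mid X=x)$. A function $\ell:[0,1]\times\{0,1\}\to\mathbb{R}$ is a proper score if for all $p,q\in[0,1]$, $\mathbb{E}_{y\sim \mathrm{Bernoulli}(q)}[\ell(p,y)]\ge \mathbb{E}_{y\sim\mathrm{Bernoulli}(q)}[\ell(q,y)]$. For a (measurable) predictor $h:\mathcal{X}\to[0,1]$, its risk is $\mathcal{R}_\ell(h):=\mathbb{E}_{X,Z}[\ell(h(X),Z)]$; a constant $c\in[0,1]$ is viewed as the constant predictor. The excess risk of the target coverage is $\ell\text{-ERT}:=\mathcal{R}_\ell(1-\alpha)-\mathcal{R}_\ell(p)$.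 All expectations are assumed to be well-defined. *)

From mathcomp Require Import all_boot all_order all_algebra.
From mathcomp Require Import all_classical all_reals all_analysis.
Set Implicit Arguments. Unset Strict Implicit. Unset Printing Implicit Defensive.
Import Order.TTheory GRing.Theory Num.Theory.
Local Open Scope ring_scope.
Local Open Scope classical_set_scope.

Section Defs.
Context (R : realType).

Definition convex01 (f : R -> R) : Prop :=
  forall x y t : R, 0 <= x <= 1 -> 0 <= y <= 1 -> 0 <= t <= 1 ->
    f (t * x + (1 - t) * y) <= t * f x + (1 - t) * f y.

Definition subderivative01 (f g : R -> R) : Prop :=
  forall p q : R, 0 <= p <= 1 -> 0 <= q <= 1 -> f p + g p * (q - p) <= f q.

(* the score  l(p,y) = - f(p) - (y - p) f'(p), y in {0,1} encoded as a real *)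
Definition score_of (f g : R -> R) (p y : R) : R := - f p - (y - p) * g p.

Definition bern_exp (l : R -> R -> R) (p q : R) : R := q * l p 1 + (1 - q) * l p 0.

Definition proper_score (l : R -> R -> R) : Prop :=
  forall p q : R, 0 <= p <= 1 -> 0 <= q <= 1 -> bern_exp l q q <= bern_exp l p q.
End Defs.

Definition coverZ {R : realType} {Om Xt Yt : Type}
  (C : Xt -> set Yt) (X : Om -> Xt) (Y : Om -> Yt) (w : Om) : R :=
  if `[< C (X w) (Y w) >] then 1 else 0.

Definition risk {R : realType} {d : measure_display} {Om : measurableType d} {Xt : Type}
  (P : probability Om R) (l : R -> R -> R) (X : Om -> Xt) (Z : Om -> R)
  (h : Xt -> R) : \bar R :=
  (\int[P]_w (l (h (X w)) (Z w))%:E)%E.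

From mathcomp Require Import all_boot all_order all_algebra.
From mathcomp Require Import all_classical all_reals all_analysis.
From mathcomp Require Import measurable_realfun ring lra.
Set Implicit Arguments. Unset Strict Implicit. Unset Printing Implicit Defensive.
Import Order.TTheory GRing.Theory Num.Theory.
Local Open Scope ring_scope.
Local Open Scope classical_set_scope.
Import HBNNSimple.

(* Properness: the expected score of a forecast p under Bernoulli(q) is
   -f(p) - (q - p) f'(p), which dominates -f(q) by the subgradient inequality.

   Excess risk: f and f' vanish at 1 - alpha, so the constant forecast has risk 0,
   while the score of the forecast p(X) is -f(p(X)) - (Z - p(X)) f'(p(X)).  The
   cross term has mean zero because p(X) is the conditional expectation of Z given
   X and f' o p is a bounded measurable function (f' is monotone on [0, 1]).  That
   orthogonality is obtained for indicators of events {X in A} from the defining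
   property of p, then for simple functions of X by linearity, for nonnegative
   measurable functions of X by monotone convergence, and for bounded ones by
   splitting into positive and negative parts. *)

Lemma bounded_le (T : Type) (R : realType) (A : set T) (u : T -> R) (M : R) :
  (forall x, A x -> `|u x| <= M) -> [bounded u x | x in A].
Proof.
move=> uM; rewrite /bounded_near; near=> N => x Ax /=.
apply: le_trans (uM x Ax) _.
by near: N; exact/nbhs_pinfty_ge/num_real.
Unshelve. all: end_near. Qed.

Lemma integrableB_EFin d (T : measurableType d) (R : realType)
    (mu : {measure set T -> \bar R}) (D : set T) (f g : T -> R) :
  measurable D -> mu.-integrable D (EFin \o f) -> mu.-integrable D (EFin \o g) ->
  mu.-integrable D (EFin \o (f \- g)).
Proof. by move=> mD fi gi; exact: (integrableB mD fi gi). Qed.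

Lemma finite_measure_integrable_bounded d (T : measurableType d) (R : realType)
    (mu : {finite_measure set T -> \bar R}) (u : T -> R) (M : R) :
  measurable_fun setT u -> (forall x, `|u x| <= M) -> mu.-integrable setT (EFin \o u).
Proof.
move=> mu_u uM; apply: measurable_bounded_integrable => //.
  by rewrite -ge0_fin_numE // fin_num_measure.
by apply: (@bounded_le _ _ _ _ M) => x _; exact: uM.
Qed.

Section integral_mul_comp.
Local Open Scope ereal_scope.
Context d dX (Om : measurableType d) (Xt : measurableType dX) (R : realType).
Variables (P : {measure set Om -> \bar R}) (X : Om -> Xt).
Hypothesis mX : measurable_fun setT X.

Lemma integral_mul_indic_comp (u : Om -> R) (B : set Xt) :
  \int[P]_w (u w * \1_B (X w))%:E = \int[P]_(w in X @^-1` B) (u w)%:E.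
Proof.
rewrite [RHS]integral_mkcond; apply: eq_integral => w _.
rewrite patchE indicE /= (_ : (X w \in B) = (w \in X @^-1` B)) //.
by case: ifP; rewrite ?mulr1 ?mulr0.
Qed.

Lemma ge0_integral_mul_nnsfun_comp (u : Om -> R) (s : {nnsfun Xt >-> R}) :
  measurable_fun setT u -> (forall w, (0 <= u w)%R) ->
  \int[P]_w (u w * s (X w))%:E =
  \sum_(y \in range s) y%:E * \int[P]_(w in X @^-1` (s @^-1` [set y])) (u w)%:E.
Proof.
move=> mu u0.
have mindic y : measurable_fun setT (fun w => (u w * \1_(s @^-1` [set y]) (X w))%R).
  by apply: measurable_funM => //; apply: measurableT_comp => //; exact: measurable_indic.
transitivity (\int[P]_w
    \sum_(y \in range s) (y * (u w * \1_(s @^-1` [set y]) (X w)))%R%:E).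
  apply: eq_integral => w _; rewrite fsumEFin; last exact: fimfunP.
  by rewrite fimfunE mulr_fsumr; congr EFin; apply: eq_fsbigr => y _; rewrite mulrCA.
rewrite ge0_integral_fsum //; last first.
- move=> y w _; rewrite lee_fin indicE.
  case: (boolP (X w \in _)) => [/set_mem /= <-|_]; last by rewrite !mulr0.
  by rewrite mulr1 mulr_ge0.
- by move=> y; apply/measurable_EFinP; exact: measurable_funM.
apply: eq_fsbigr => y /set_mem [x _ <-].
rewrite -integral_mul_indic_comp -ge0_integralZl //.
- by apply/measurable_EFinP.
- by move=> w _; rewrite lee_fin indicE mulr_ge0.
- by rewrite lee_fin.
Qed.

Lemma ge0_integral_mul_comp_approx (u : Om -> R) (phi : Xt -> R)
    (mphi : measurable_fun setT (EFin \o phi)) :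
  measurable_fun setT u -> (forall w, (0 <= u w)%R) -> (forall x, (0 <= phi x)%R) ->
  \int[P]_w (u w * phi (X w))%:E =
  limn (fun n => \int[P]_w (u w * nnsfun_approx measurableT mphi n (X w))%:E).
Proof.
move=> mu u0 phi0; rewrite -monotone_convergence //.
- apply: eq_integral => w _; apply/esym/cvg_lim => //.
  under eq_fun do rewrite EFinM.
  rewrite EFinM; apply: cvgeZl => //.
  by apply: cvg_nnsfun_approx => // x _; rewrite lee_fin.
- move=> n; apply/measurable_EFinP; apply: measurable_funM => //.
  exact: measurableT_comp.
- by move=> n w _; rewrite lee_fin mulr_ge0.
- move=> w _ m n mn; rewrite lee_fin ler_wpM2l //.
  exact/lefP/nd_nnsfun_approx.
Qed.

Lemma integrable_mul_comp (u : Om -> R) (psi : Xt -> R) (M : R) :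
  P.-integrable setT (EFin \o u) -> measurable_fun setT psi ->
  (forall x, `|psi x| <= M)%R ->
  P.-integrable setT (EFin \o (fun w => u w * psi (X w))%R).
Proof.
move=> iu mpsi psiM.
have -> : EFin \o (fun w => u w * psi (X w))%R =
  (EFin \o u) \* (EFin \o (psi \o X)) by [].
apply: integrableMl => //; first exact: measurableT_comp.
by apply: (@bounded_le _ _ _ _ M) => w _; exact: psiM.
Qed.

Variables (g h : Om -> R).
Hypotheses (mg : measurable_fun setT g) (mh : measurable_fun setT h).
Hypotheses (g0 : forall w, (0 <= g w)%R) (h0 : forall w, (0 <= h w)%R).
Hypothesis gh : forall A, measurable A ->
  \int[P]_(w in X @^-1` A) (g w)%:E = \int[P]_(w in X @^-1` A) (h w)%:E.

Lemma ge0_integral_mul_comp_eq (phi : Xt -> R) :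
  measurable_fun setT phi -> (forall x, (0 <= phi x)%R) ->
  \int[P]_w (g w * phi (X w))%:E = \int[P]_w (h w * phi (X w))%:E.
Proof.
move=> mphi phi0; have mphiE : measurable_fun setT (EFin \o phi).
  exact/measurable_EFinP.
rewrite !(ge0_integral_mul_comp_approx mphiE) //.
congr (limn _); apply/funext => n.
rewrite !ge0_integral_mul_nnsfun_comp //; apply: eq_fsbigr => y _.
by rewrite gh // -[X in measurable X]setTI; apply: measurable_funP.
Qed.

Hypotheses (ig : P.-integrable setT (EFin \o g)) (ih : P.-integrable setT (EFin \o h)).

Lemma ge0_integral_mul_comp_eq0 (phi : Xt -> R) (M : R) :
  measurable_fun setT phi -> (forall x, 0 <= phi x)%R -> (forall x, `|phi x| <= M)%R ->
  \int[P]_w ((g w - h w) * phi (X w))%:E = 0.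
Proof.
move=> mphi phi0 phiM; have igphi := integrable_mul_comp ig mphi phiM.
have ihphi := integrable_mul_comp ih mphi phiM.
under eq_integral do rewrite mulrBl EFinB.
by rewrite integralB_EFin // ge0_integral_mul_comp_eq // subee // integrable_fin_num.
Qed.

Lemma integral_mul_comp_eq0 (phi : Xt -> R) (M : R) :
  measurable_fun setT phi -> (forall x, `|phi x| <= M)%R ->
  \int[P]_w ((g w - h w) * phi (X w))%:E = 0.
Proof.
move=> mphi phiM; have igh := integrableB_EFin measurableT ig ih.
have phi_norm x : (phi^\+ x + phi^\- x = `|phi x|)%R.
  by rewrite -[RHS]/((Num.norm \o phi) x) -funrposDneg.
have [posM negM] : (forall x, `|phi^\+ x| <= M)%R /\ (forall x, `|phi^\- x| <= M)%R.
  split=> x; have := phiM x; rewrite -phi_norm => sumM;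
    have p0 := funrpos_ge0 phi x; have n0 := funrneg_ge0 phi x;
    by rewrite ger0_norm //; lra.
have mpos := measurable_funrpos mphi; have mneg := measurable_funrneg mphi.
have phiE x : phi x = (phi^\+ x - phi^\- x)%R by rewrite -[in LHS](funrposBneg phi).
under eq_integral do rewrite phiE mulrBr EFinB.
have ipos := integrable_mul_comp igh mpos posM.
have ineg := integrable_mul_comp igh mneg negM.
rewrite integralB_EFin // (ge0_integral_mul_comp_eq0 mpos (funrpos_ge0 phi) posM).
by rewrite (ge0_integral_mul_comp_eq0 mneg (funrneg_ge0 phi) negM) sube0.
Qed.

End integral_mul_comp.

Section subgradient.
Context (R : realType) (f g : R -> R).
Hypothesis fg : subderivative01 f g.

Lemma bern_exp_score_of p q : bern_exp (score_of f g) p q = - f p - (q - p) * g p.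
Proof. by rewrite /bern_exp /score_of; ring. Qed.

Lemma subderivative01_proper_score : proper_score (score_of f g).
Proof.
move=> p q p01 q01; rewrite !bern_exp_score_of subrr mul0r subr0.
by have := fg p01 q01; lra.
Qed.

Lemma subderivative01_homo : {in `[0, 1] &, {homo g : x y / x <= y}}.
Proof.
move=> x y; rewrite !inE /= !in_itv /= => x01 y01; rewrite le_eqVlt => /predU1P[-> //|xy].
have := fg x01 y01; have := fg y01 x01 => fyx fxy.
have : (g y - g x) * (y - x) >= 0 by lra.
by rewrite pmulr_lge0 ?subr_gt0 // subr_ge0.
Qed.

Lemma subderivative01_norm_le q : 0 <= q <= 1 -> `|g q| <= `|g 0| + `|g 1|.
Proof.
move=> q01; have /andP[q0 q1] := q01.
have [i0 i1 iq] : [/\ (0 : R) \in `[0, 1], (1 : R) \in `[0, 1] & q \in `[0, 1]].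
  by split; rewrite inE /= in_itv /= ?lexx ?ler01.
have g0q : g 0 <= g q by exact: subderivative01_homo.
have gq1 : g q <= g 1 by exact: subderivative01_homo.
have := lerNnormlW (lexx `|g 0|); have := ler_norm (g 1).
have := normr_ge0 (g 0); have := normr_ge0 (g 1).
by rewrite ler_norml => *; apply/andP; split; lra.
Qed.

End subgradient.

Lemma measurable_comp_homo_in d (T : measurableType d) (R : realType)
    (a b : R) (g : R -> R) (u : T -> R) :
  {in `[a, b] &, {homo g : x y / x <= y}} ->
  measurable_fun setT u -> (forall x, a <= u x <= b) ->
  measurable_fun setT (g \o u).
Proof.
move=> g_nd mu uab.
pose c t := Num.max a (Num.min t b).
have -> : g \o u = (g \o c) \o u.
  apply/funext => x /=; have /andP[ax xb] := uab x.
  by rewrite /c (min_l xb) (max_r ax).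
apply: measurableT_comp => //; apply: nondecreasing_measurable => // s t st /=.
have [ab|ba] := leP a b.
- have c_ab r : c r \in `[a, b].
    by rewrite inE /= in_itv /= le_max lexx ge_max ab ge_min lexx orbT.
  by apply: g_nd; rewrite ?c_ab // le_max2 // le_min2.
- by rewrite /c !max_l // ge_min (ltW ba) orbT.
Qed.

Lemma coverZE (R : realType) (Om Xt Yt : Type) (C : Xt -> set Yt)
    (X : Om -> Xt) (Y : Om -> Yt) :
  coverZ C X Y = \1_[set w | C (X w) (Y w)] :> (Om -> R).
Proof.
apply/funext => w; rewrite /coverZ indicE.
by case: ifPn => /asboolP h; [rewrite mem_set|rewrite memNset].
Qed.

Section conditional_coverage.
Context d dX (Om : measurableType d) (Xt : measurableType dX) (R : realType).
Variables (P : probability Om R) (X : Om -> Xt) (S : set Om) (p : Xt -> R).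
Hypotheses (mX : measurable_fun setT X) (mS : measurable S).
Hypotheses (mp : measurable_fun setT p) (p01 : forall x, 0 <= p x <= 1).
Hypothesis coverage : forall A, measurable A ->
  P (X @^-1` A `&` S) = (\int[P]_(w in X @^-1` A) (p (X w))%:E)%E.

Let mpX : measurable_fun setT (p \o X).
Proof. exact: measurableT_comp. Qed.

Let iS : P.-integrable setT (EFin \o \1_S).
Proof. exact: integrable_indic. Qed.

Let ipX : P.-integrable setT (EFin \o (p \o X)).
Proof.
apply: (@finite_measure_integrable_bounded _ _ _ _ _ 1) => // w.
by have /andP[p0 p1] := p01 (X w); rewrite /= ger0_norm.
Qed.

Let iZp : P.-integrable setT (EFin \o (\1_S \- (p \o X))).
Proof. exact: integrableB_EFin. Qed.

Lemma integrable_residual_mul_comp (phi : Xt -> R) (M : R) :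
  measurable_fun setT phi -> (forall x, `|phi x| <= M) ->
  P.-integrable setT (EFin \o (fun w => (\1_S w - p (X w)) * phi (X w))).
Proof.
by move=> mphi phiM; apply: (integrable_mul_comp mX iZp mphi phiM).
Qed.

Lemma integral_residual_mul_comp (phi : Xt -> R) (M : R) :
  measurable_fun setT phi -> (forall x, `|phi x| <= M) ->
  (\int[P]_w ((\1_S w - p (X w)) * phi (X w))%:E = 0)%E.
Proof.
move=> mphi phiM.
have mZ := (measurable_indicP R S).1 mS.
apply: (integral_mul_comp_eq0 mX mZ mpX _ _ _ iS ipX mphi phiM).
- by move=> w; rewrite indicE ler0n.
- by move=> w; have /andP[] := p01 (X w).
- move=> A mA; rewrite integral_indic //; last by rewrite -[_ @^-1` _]setTI; exact: mX.
  by rewrite setIC; exact: coverage.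
Qed.

End conditional_coverage.

Theorem proposition1
  (R : realType) (d dX dY : measure_display)
  (Om : measurableType d) (P : probability Om R)
  (Xt : measurableType dX) (Yt : measurableType dY)
  (X : Om -> Xt) (Y : Om -> Yt) (C : Xt -> set Yt)
  (p : Xt -> R) (alpha : R) (f f' : R -> R) :
  0 < alpha < 1 ->
  measurable_fun setT X -> measurable_fun setT Y ->
  measurable [set xy : Xt * Yt | C xy.1 xy.2] ->
  (* p is the conditional coverage P(Z = 1 | X = x) *)
  measurable_fun setT p ->
  (forall x, 0 <= p x <= 1) ->
  (forall A, measurable A ->
     P (X @^-1` A `&` [set w | C (X w) (Y w)]) =
     (\int[P]_(w in X @^-1` A) (p (X w))%:E)%E) ->
  (* hypotheses on f and f' *)
  (forall q, 0 <= q <= 1 -> 0 <= f q) ->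
  convex01 f ->
  f (1 - alpha) = 0 ->
  subderivative01 f f' ->
  f' (1 - alpha) = 0 ->
  (* expectations are well-defined *)
  P.-integrable setT
    (fun w => (score_of f f' (1 - alpha) (coverZ C X Y w))%:E) ->
  P.-integrable setT
    (fun w => (score_of f f' (p (X w)) (coverZ C X Y w))%:E) ->
  P.-integrable setT (fun w => (f (p (X w)))%:E) ->
  proper_score (score_of f f') /\
  (risk P (score_of f f') X (coverZ C X Y) (fun _ => (1 - alpha)%R)
   - risk P (score_of f f') X (coverZ C X Y) p)%E
  = (\int[P]_w (f (p (X w)))%:E)%E.
Proof.
move=> _ mX mY mC mp p01 coverage _ _ f_alpha f'_sub f'_alpha _ _ i_f.
split; first exact: subderivative01_proper_score.
set S := [set w | C (X w) (Y w)].
have mS : measurable S.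
  by have := measurable_fun_pair mX mY measurableT mC; rewrite setTI.
have mk : measurable_fun setT (f' \o p).
  exact: measurable_comp_homo_in (subderivative01_homo f'_sub) mp p01.
have kM x : `|(f' \o p) x| <= `|f' 0| + `|f' 1|.
  exact: (subderivative01_norm_le f'_sub (p01 x)).
have cross0 := integral_residual_mul_comp mX mS mp p01 coverage mk kM.
have icross := integrable_residual_mul_comp P mX mS mp p01 mk kM.
rewrite /risk coverZE integral0_eq => [|w _]; last first.
  by rewrite /score_of f_alpha f'_alpha mulr0 subr0 oppr0.
have scoreE w : (score_of f f' (p (X w)) (\1_S w))%:E =
    ((-1)%:E * ((f (p (X w)))%:E + ((\1_S w - p (X w)) * f' (p (X w)))%:E))%E.
  by rewrite -EFinD -EFinM /score_of; congr EFin; ring.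
under eq_integral do rewrite scoreE.
rewrite integralZl //; last exact: integrableD.
by rewrite integralD_EFin // cross0 adde0 mulN1e sub0e oppeK.
Qed.
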